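(* Let $I\subseteq S=\Bbbk[x_1,\dots,x_n]$ be a squarefree monomial ideal which is Gotzmann in $S$, and suppose $I\subseteq(x_i)$. Then the ideal $\frac{1}{x_i}I=\{f\in S: x_if\in I\}$ (generated by the monomials $m/x_i$ for $m$ a minimal generator of $I$) is Gotzmann in $S$.
   Context: Let $\Bbbk$ be a field and $S=\Bbbk[x_1,\dots,x_n]$, $\mathbf m=(x_1,\dots,x_n)$. A monomial ideal is squarefree if its minimal monomial generators are squarefree. For a homogeneous ideal $I$, $I_d$ is its degree-$d$ component, $|I_d|$ its $\Bbbk$-dimension, and $\mathbf m_1I_d$ the span of $\{x_jf: f\in I_d\}$. An ideal $I$ of $S$ is Gotzmann if for every $d$ and every homogeneous ideal $J\subseteq S$ with $|J_d|=|I_d|$ one has $|\mathbf m_1I_d|\le|\mathbf m_1J_d|$. *)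

From HB Require Import structures.
From mathcomp Require Import all_boot all_order all_algebra.
Set Implicit Arguments. Unset Strict Implicit. Unset Printing Implicit Defensive.
Import Order.TTheory GRing.Theory Num.Theory.
Local Open Scope ring_scope.

(* Monomials of degree d in n variables x_0..x_(n-1): exponent vectors
   (entries bounded by d) with total degree d. *)
Definition mon (n d : nat) : predArgType :=
  {m : {ffun 'I_n -> 'I_d.+1} | (\sum_(i < n) (m i : nat) == d)%N}.
HB.instance Definition _ n d := [Finite of mon n d by <:].

Definition expo n d (m : mon n d) (i : 'I_n) : nat := val m i.

(* S_d: homogeneous polynomials of degree d over F, as coefficient vectors
   indexed by the degree-d monomials (a finite-dimensional F-vector space). *)
Definition hpoly (F : fieldType) (n d : nat) := {ffun mon n d -> F^o}.

Definition coef (F : fieldType) n d (f : hpoly F n d) (e : 'I_n -> nat) : F :=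
  \sum_(m : mon n d | [forall i, expo m i == e i]) f m.

Definition mulx (F : fieldType) n d (j : 'I_n) (f : hpoly F n d) : hpoly F n d.+1 :=
  [ffun m : mon n d.+1 =>
     if (0 < expo m j)%N then coef f (fun i => (expo m i - (i == j))%N) else 0].

Definition mulxL (F : fieldType) n d (j : 'I_n) : 'Hom(hpoly F n d, hpoly F n d.+1) :=
  linfun (@mulx F n d j).

Definition m1 (F : fieldType) n d (V : {vspace hpoly F n d}) : {vspace hpoly F n d.+1} :=
  (\sum_(j < n) (mulxL F d j @: V))%VS.

(* A homogeneous ideal of S, given by its graded components I_d (subspaces of S_d)
   closed under multiplication by the variables. *)
Definition graded (F : fieldType) n := forall d : nat, {vspace hpoly F n d}.

Definition is_hideal (F : fieldType) n (I : graded F n) : Prop :=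
  forall (d : nat) (j : 'I_n) (f : hpoly F n d), f \in I d -> mulx j f \in I d.+1.

Definition Gotzmann (F : fieldType) n (I : graded F n) : Prop :=
  forall (d : nat) (J : graded F n), is_hideal J ->
    \dim (J d) = \dim (I d) -> (\dim (m1 (I d)) <= \dim (m1 (J d)))%N.

Definition monp (F : fieldType) n d (m : mon n d) : hpoly F n d :=
  [ffun m' => if m' == m then 1 else 0].

Definition monideal (F : fieldType) n (gens : seq {ffun 'I_n -> nat}) : graded F n :=
  fun d => (<<[seq monp F m | m <- enum (mon n d) &
                 has (fun g : {ffun 'I_n -> nat} => [forall i, g i <= expo m i]%N) gens]>>)%VS.

Definition squarefree_gens n (gens : seq {ffun 'I_n -> nat}) : bool :=
  all (fun g : {ffun 'I_n -> nat} => [forall i, g i <= 1]%N) gens.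

Definition var_exp n (i : 'I_n) : {ffun 'I_n -> nat} := [ffun k => nat_of_bool (k == i)].
Definition xideal (F : fieldType) n (i : 'I_n) : graded F n := monideal F [:: var_exp i].

Definition colon_var (F : fieldType) n (I : graded F n) (i : 'I_n) : graded F n :=
  fun d => (mulxL F d i @^-1: I d.+1)%VS.

(* Multiplication by x_i is injective and commutes with m_1. If every I_(d+1)
   lies in x_i S_d, then x_i maps (I : x_i)_d onto I_(d+1) and m_1 (I : x_i)_d
   onto m_1 I_(d+1), so both have the dimensions of the corresponding
   components of I. A competitor J for (I : x_i) in degree d gives the
   competitor x_i J for I in degree d+1, with m_1 (x_i J_d) = x_i m_1 J_d;
   Gotzmann's inequality for I then transfers back. *)

From HB Require Import structures.
From mathcomp Require Import all_boot all_order all_algebra.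
Set Implicit Arguments. Unset Strict Implicit. Unset Printing Implicit Defensive.
Import Order.TTheory GRing.Theory Num.Theory.
Local Open Scope ring_scope.

Definition decr n (j : 'I_n) (e : 'I_n -> nat) : 'I_n -> nat :=
  fun k => (e k - (k == j))%N.

Lemma sum_decr n (j : 'I_n) (e : 'I_n -> nat) : (0 < e j)%N ->
  (\sum_(k < n) e k)%N = (\sum_(k < n) decr j e k).+1.
Proof.
move=> ej_gt0; rewrite (bigD1 j) //= [in RHS](bigD1 j) //= /decr eqxx.
rewrite -addSn subn1 prednK //; congr (_ + _)%N.
by apply: eq_bigr => k /negbTE ->; rewrite subn0.
Qed.

Section Coefficients.
Variables (F : fieldType) (n : nat).

Lemma expo_inj d (m m' : mon n d) : expo m =1 expo m' -> m = m'.
Proof. by move=> eq_m; apply/val_inj/ffunP => k; apply/val_inj/eq_m. Qed.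

Lemma sum_expo d (m : mon n d) : (\sum_(k < n) expo m k)%N = d.
Proof. by case: m => f hf; apply/eqP. Qed.

Lemma exists_mon d (e : 'I_n -> nat) : (\sum_(k < n) e k)%N = d ->
  exists m : mon n d, expo m =1 e.
Proof.
move=> sum_e.
have e_lt k : (e k < d.+1)%N by rewrite ltnS -sum_e (bigD1 k) //= leq_addr.
pose f : {ffun 'I_n -> 'I_d.+1} := [ffun k => Ordinal (e_lt k)].
have sum_f : (\sum_(k < n) (f k : nat) == d)%N.
  by apply/eqP; rewrite -[in RHS]sum_e; apply: eq_bigr => k _; rewrite ffunE.
by exists (exist _ f sum_f) => k; rewrite /expo /= ffunE.
Qed.

Lemma coef_ext d (f : hpoly F n d) e e' : e =1 e' -> coef f e = coef f e'.
Proof.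
by move=> eq_e; apply: eq_bigl => m; apply: eq_forallb => k; rewrite eq_e.
Qed.

Lemma coef_expo d (f : hpoly F n d) m : coef f (expo m) = f m.
Proof.
rewrite /coef (big_pred1 m) // => m' /=.
by apply/forallP/eqP => [eq_m|->//]; apply: expo_inj => k; apply/eqP/eq_m.
Qed.

Lemma coef_deg_neq d (f : hpoly F n d) e :
  (\sum_(k < n) e k)%N != d -> coef f e = 0.
Proof.
move=> sum_e; rewrite /coef big_pred0 // => m; apply/negP => /forallP eq_m.
move: sum_e; rewrite -(sum_expo m) => /eqP; apply.
by apply: eq_bigr => k _; apply/esym/eqP.
Qed.

Lemma hpolyP d (f g : hpoly F n d) : (forall e, coef f e = coef g e) -> f = g.
Proof. by move=> eq_fg; apply/ffunP => m; rewrite -!coef_expo. Qed.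

Lemma coefD_scale d a (f g : hpoly F n d) e :
  coef (a *: f + g) e = a * coef f e + coef g e.
Proof.
by rewrite /coef mulr_sumr -big_split; apply: eq_bigr => m _; rewrite !ffunE.
Qed.

Lemma coef_mulx d j (f : hpoly F n d) e :
  coef (mulx j f) e = if (0 < e j)%N then coef f (decr j e) else 0.
Proof.
have [sum_e|sum_e] := eqVneq (\sum_(k < n) e k)%N d.+1.
  have [m eq_m] := exists_mon sum_e.
  rewrite (coef_ext _ (fun k => esym (eq_m k))) coef_expo ffunE eq_m.
  by case: ifP => // _; apply: coef_ext => k; rewrite /decr eq_m.
rewrite coef_deg_neq //; case: ifP => // ej_gt0; rewrite coef_deg_neq //.
by apply: contra sum_e; rewrite (sum_decr ej_gt0) => /eqP ->.
Qed.

Lemma mulxC d i j (f : hpoly F n d) : mulx i (mulx j f) = mulx j (mulx i f).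
Proof.
apply: hpolyP => e; rewrite !coef_mulx.
have [->//|neq_ij] := eqVneq i j.
rewrite /decr (negbTE neq_ij) eq_sym (negbTE neq_ij) !subn0.
rewrite (coef_ext _ (e' := decr i (decr j e))); last by move=> k; rewrite /decr subnAC.
by case: (0 < e i)%N; case: (0 < e j)%N.
Qed.

Lemma mulx_eq0 d i (f : hpoly F n d) : mulx i f = 0 -> f = 0.
Proof.
move=> xf0; apply/ffunP => m; rewrite ffunE -coef_expo.
have := coef_mulx i f (fun k => expo m k + (k == i))%N.
rewrite xf0 /coef big1 => [|m' _]; last by rewrite ffunE.
rewrite eqxx addn1 /= => xf_coef; rewrite [RHS]xf_coef.
by apply: eq_bigl => m'; apply: eq_forallb => k; rewrite /decr addnK.
Qed.

Lemma coef_monp d (m : mon n d) e :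
  coef (monp F m) e = if [forall k, expo m k == e k] then 1 else 0.
Proof.
case: ifP => [/forallP eq_m|/negbT neq_m].
  by rewrite -(coef_ext _ (fun k => eqP (eq_m k))) coef_expo ffunE eqxx.
have [sum_e|] := eqVneq (\sum_(k < n) e k)%N d; last exact: coef_deg_neq.
have [m' eq_m'] := exists_mon sum_e.
rewrite -(coef_ext _ eq_m') coef_expo ffunE; case: eqP => // m'm; subst m'.
by move: neq_m; rewrite negb_forall => /existsP [k]; rewrite eq_m' eqxx.
Qed.

Lemma monp_mulx d i (m : mon n d.+1) (m' : mon n d) :
  (0 < expo m i)%N -> expo m' =1 decr i (expo m) ->
  monp F m = mulx i (monp F m').
Proof.
move=> mi_gt0 eq_m'; apply: hpolyP => e; rewrite coef_mulx !coef_monp.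
case: (boolP [forall k, expo m k == e k]) => [/forallP eq_m|neq_m].
  rewrite -(eqP (eq_m i)) mi_gt0; case: forallP => // [[]] k.
  by rewrite eq_m' /decr (eqP (eq_m k)).
case: ifP => // ei_gt0; case: forallP => // eq_dec; case/negP: neq_m.
apply/forallP => k; move: (eqP (eq_dec k)); rewrite eq_m' /decr.
have [->|_] := eqVneq k i; last by rewrite !subn0 => ->.
by rewrite !subn1 => /eqP; rewrite -(eqn_add2r 1) !addn1 !prednK.
Qed.

End Coefficients.

Lemma mulx_is_linear F n d j : linear (@mulx F n d j).
Proof.
move=> a f g; apply/ffunP => m; rewrite !ffunE.
by case: ifP => _; [apply: coefD_scale | rewrite scaler0 addr0].
Qed.

HB.instance Definition _ (F : fieldType) n d (j : 'I_n) :=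
  GRing.isLinear.Build F (hpoly F n d) (hpoly F n d.+1) _ (@mulx F n d j)
    (@mulx_is_linear F n d j).

Section MultiplicationByVariable.
Variables (F : fieldType) (n : nat).

Lemma mulxLE d (j : 'I_n) (f : hpoly F n d) : mulxL F d j f = mulx j f.
Proof. by rewrite lfunE. Qed.

Lemma lker_mulxL d (i : 'I_n) : lker (mulxL F d i) = 0%VS.
Proof.
apply/eqP; rewrite -subv0; apply/subvP => f.
by rewrite memv_ker memv0 mulxLE => /eqP/mulx_eq0 ->.
Qed.

Lemma dim_img_mulxL d (i : 'I_n) (U : {vspace hpoly F n d}) :
  \dim (mulxL F d i @: U) = \dim U.
Proof. by rewrite limg_dim_eq // lker_mulxL capv0. Qed.

Lemma img_mulxL_m1 d (i : 'I_n) (U : {vspace hpoly F n d}) :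
  (mulxL F d.+1 i @: m1 U)%VS = m1 (mulxL F d i @: U).
Proof.
rewrite /m1 limg_sum; apply: eq_bigr => j _; rewrite -!limg_comp.
by congr (_ @: U)%VS; apply/lfunP => f; rewrite !comp_lfunE !mulxLE mulxC.
Qed.

Lemma xideal_sub_img_mulxL d (i : 'I_n) :
  (xideal F i d.+1 <= limg (mulxL F d i))%VS.
Proof.
apply/span_subvP => f /mapP [m]; rewrite mem_filter => /andP [xi_m _] ->.
have mi_gt0 : (0 < expo m i)%N.
  by case/orP: xi_m => [/forallP /(_ i)|//]; rewrite ffunE eqxx.
have [m' eq_m'] : exists m' : mon n d, expo m' =1 decr i (expo m).
  by apply: exists_mon; apply/eq_add_S; rewrite -sum_decr // sum_expo.
by rewrite (monp_mulx F mi_gt0 eq_m') -mulxLE memv_img ?memvf.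
Qed.

Definition mulx_graded (i : 'I_n) (J : graded F n) : graded F n :=
  fun d => if d is e.+1 then (mulxL F e i @: J e)%VS else 0%VS.

Lemma mulx_graded_hideal (i : 'I_n) (J : graded F n) :
  is_hideal J -> is_hideal (mulx_graded i J).
Proof.
move=> idealJ [|d] j f /=.
  by rewrite memv0 => /eqP ->; rewrite -mulxLE linear0 mem0v.
case/memv_imgP => g Jg ->; rewrite mulxLE mulxC -mulxLE.
by apply/memv_img/idealJ.
Qed.

Lemma Gotzmann_colon_var (I : graded F n) (i : 'I_n) :
  Gotzmann I -> (forall d, (I d.+1 <= limg (mulxL F d i))%VS) ->
  Gotzmann (colon_var I i).
Proof.
move=> gotzI I_sub d J idealJ dimJ.
have img_colon : (mulxL F d i @: colon_var I i d)%VS = I d.+1.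
  exact/lpreimK/I_sub.
have dim_xJ : \dim (mulx_graded i J d.+1) = \dim (I d.+1).
  by rewrite /= dim_img_mulxL dimJ -img_colon dim_img_mulxL.
have := gotzI d.+1 _ (mulx_graded_hideal idealJ) dim_xJ.
by rewrite /= -img_colon -!img_mulxL_m1 !dim_img_mulxL.
Qed.

End MultiplicationByVariable.

Theorem lemma3p7 (F : fieldType) (n : nat) (gens : seq {ffun 'I_n -> nat}) (i : 'I_n) :
  squarefree_gens gens ->
  Gotzmann (monideal F gens) ->
  (forall d : nat, (monideal F gens d <= xideal F i d)%VS) ->
  Gotzmann (colon_var (monideal F gens) i).
Proof.
move=> _ gotzI I_sub_xi; apply: Gotzmann_colon_var => // d.
exact: subv_trans (I_sub_xi d.+1) (xideal_sub_img_mulxL F d i).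
Qed.
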